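(* Let $\Pi^{(1)},\Pi^{(2)}$ be two projectors on a finite-dimensional Hilbert space $\mathcal{H}$. For every $\delta>0$ there exists a projector $\Pi^\star$ on $\mathcal{H}$ such that for all quantum states $\rho\in\mathcal{D}(\mathcal{H})$, $$\mathrm{Tr}[\Pi^\star\rho]\ge\max\{\mathrm{Tr}[\Pi^{(1)}\rho],\mathrm{Tr}[\Pi^{(2)}\rho]\}-\delta,$$ and $$\Pi^\star\preceq\frac{2}{\delta^2}\left(\Pi^{(1)}+\Pi^{(2)}\right).$$
   Context: $\mathcal{D}(\mathcal{H})$ is the set of density operators on $\mathcal{H}$; $P\preceq Q$ means $Q-P$ is positive semi-definite. *)

From HB Require Import structures.
From mathcomp Require Import all_boot all_order all_algebra.
Set Implicit Arguments. Unset Strict Implicit. Unset Printing Implicit Defensive.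
Import Order.TTheory GRing.Theory Num.Theory.
Local Open Scope ring_scope.

(* The finite-dimensional Hilbert space H is modelled as C^n (row vectors),
   C an arbitrary numClosedFieldType (e.g. the complex numbers), operators as
   n x n matrices, adjoint = conjugate transpose. *)

Definition adjmx (C : numClosedFieldType) (m n : nat) (A : 'M[C]_(m, n)) : 'M[C]_(n, m) :=
  (map_mx Num.conj A)^T.

Definition psd (C : numClosedFieldType) (n : nat) (A : 'M[C]_n) : Prop :=
  adjmx A = A /\ forall v : 'rV[C]_n, 0 <= (v *m A *m adjmx v) 0 0.

Definition loewner_le (C : numClosedFieldType) (n : nat) (P Q : 'M[C]_n) : Prop :=
  psd (Q - P).

Definition projector (C : numClosedFieldType) (n : nat) (P : 'M[C]_n) : Prop :=
  adjmx P = P /\ P *m P = P.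

Definition density (C : numClosedFieldType) (n : nat) (rho : 'M[C]_n) : Prop :=
  psd rho /\ \tr rho = 1.

From HB Require Import structures.
From mathcomp Require Import all_boot all_order all_algebra.
From mathcomp Require Import sesquilinear spectral ring.
Import Order.TTheory GRing.Theory Num.Theory.
Local Open Scope ring_scope.

Set Implicit Arguments. Unset Strict Implicit.

(* Let A = P1 + P2 and let S be the spectral projector of A onto its eigenvalues
   >= c = delta^2/2, so that c S <= A and (1 - S) A (1 - S) <= c (1 - S).  The
   operator Cauchy-Schwarz inequality
     P <= (1 + t) S P S + (1 + 1/t) (1 - S) P (1 - S)     (t > 0)
   with t = delta gives Pi <= (1 + delta) S + (1 + 1/delta) c (1 - S), and for
   delta <= 1 the right-hand side is below S + delta; pairing with a state
   yields the trace bound.  For delta > 1 the projector S = 0 already works. *)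

Section Loewner.
Variable C : numClosedFieldType.
Implicit Types (a t : C).

Lemma adjmxE m n (A : 'M[C]_(m, n)) i j : adjmx A i j = (A j i)^*.
Proof. by rewrite /adjmx !mxE. Qed.

Lemma adjmxK m n (A : 'M[C]_(m, n)) : adjmx (adjmx A) = A.
Proof. by apply/matrixP=> i j; rewrite !adjmxE conjCK. Qed.

Lemma adjmxM m n p (A : 'M[C]_(m, n)) (B : 'M[C]_(n, p)) :
  adjmx (A *m B) = adjmx B *m adjmx A.
Proof.
apply/matrixP=> i j; rewrite adjmxE !mxE rmorph_sum.
by apply: eq_bigr => k _; rewrite !adjmxE rmorphM mulrC.
Qed.

Lemma adjmxD m n (A B : 'M[C]_(m, n)) : adjmx (A + B) = adjmx A + adjmx B.
Proof. by apply/matrixP=> i j; rewrite !(adjmxE, mxE) rmorphD. Qed.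

Lemma adjmxB m n (A B : 'M[C]_(m, n)) : adjmx (A - B) = adjmx A - adjmx B.
Proof. by apply/matrixP=> i j; rewrite !(adjmxE, mxE) rmorphB. Qed.

Lemma adjmxZ m n a (A : 'M[C]_(m, n)) : adjmx (a *: A) = a^* *: adjmx A.
Proof. by apply/matrixP=> i j; rewrite !(adjmxE, mxE) rmorphM. Qed.

Lemma adjmx1 n : adjmx (1%:M : 'M[C]_n) = 1%:M.
Proof. by apply/matrixP=> i j; rewrite !(adjmxE, mxE) eq_sym conjC_nat. Qed.

Lemma adjmx_diag n (d : 'rV[C]_n) :
  (forall i, d 0 i \is Num.real) -> adjmx (diag_mx d) = diag_mx d.
Proof.
move=> d_real; apply/matrixP=> i j; rewrite !(adjmxE, mxE) eq_sym.
by case: eqP => [->|_]; rewrite ?mulr1n ?mulr0n ?conjC0 ?(CrealP _).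
Qed.

Lemma psdZ n a (A : 'M[C]_n) : 0 <= a -> psd A -> psd (a *: A).
Proof.
move=> a_ge0 [hA qA]; split; first by rewrite adjmxZ hA geC0_conj.
by move=> v; rewrite -scalemxAr -scalemxAl mxE mulr_ge0.
Qed.

Lemma psdD n (A B : 'M[C]_n) : psd A -> psd B -> psd (A + B).
Proof.
move=> [hA qA] [hB qB]; split; first by rewrite adjmxD hA hB.
by move=> v; rewrite mulmxDr mulmxDl mxE addr_ge0.
Qed.

Lemma psd_congr n m (M : 'M[C]_n) (X : 'M[C]_(n, m)) :
  psd M -> psd (adjmx X *m M *m X).
Proof.
move=> [hM qM]; split; first by rewrite !adjmxM adjmxK hM mulmxA.
by move=> v; have := qM (v *m adjmx X); rewrite adjmxM adjmxK !mulmxA.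
Qed.

Lemma psd_diag n (d : 'rV[C]_n) : (forall i, 0 <= d 0 i) -> psd (diag_mx d).
Proof.
move=> d_ge0; split; first by apply: adjmx_diag => i; apply: ger0_real.
move=> v; rewrite mul_mx_diag mxE; apply: sumr_ge0 => i _.
by rewrite !mxE mulrAC mulr_ge0 ?mul_conjC_ge0.
Qed.

Lemma psd_diag_ge0 n (M : 'M[C]_n) i : psd M -> 0 <= M i i.
Proof.
move=> [_ qM]; have := qM (delta_mx 0 i).
have -> : adjmx (delta_mx 0 i : 'rV[C]_n) = delta_mx i 0.
  by apply/matrixP=> a b; rewrite !(adjmxE, mxE) conjC_nat andbC.
by rewrite -rowE -colE !mxE.
Qed.

Lemma psd1 n : psd (1%:M : 'M[C]_n).
Proof. by rewrite -diag_const_mx; apply: psd_diag => i; rewrite mxE ler01. Qed.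

Lemma psd_projector n (P : 'M[C]_n) : projector P -> psd P.
Proof.
move=> [hP PP]; rewrite -PP -{1}hP -[P in P *m _]mulmx1.
exact/psd_congr/psd1.
Qed.

Lemma projectorC n (P : 'M[C]_n) : projector P -> projector (1%:M - P).
Proof.
move=> [hP PP]; split; first by rewrite adjmxB adjmx1 hP.
by rewrite mulmxBl mul1mx mulmxBr mulmx1 PP subrr subr0.
Qed.

Lemma loewner_le_trans n (A B D : 'M[C]_n) :
  loewner_le A B -> loewner_le B D -> loewner_le A D.
Proof.
rewrite /loewner_le => hAB hBD.
by rewrite -[D - A](@subrKA _ B) addrC; apply: psdD.
Qed.

Lemma loewner_leD n (A B A' B' : 'M[C]_n) :
  loewner_le A B -> loewner_le A' B' -> loewner_le (A + A') (B + B').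
Proof. by rewrite /loewner_le opprD addrACA; apply: psdD. Qed.

Lemma loewner_leZ n a (A B : 'M[C]_n) :
  0 <= a -> loewner_le A B -> loewner_le (a *: A) (a *: B).
Proof. by rewrite /loewner_le -scalerBr; apply: psdZ. Qed.

Lemma loewner_le_scale n a b (A : 'M[C]_n) :
  a <= b -> psd A -> loewner_le (a *: A) (b *: A).
Proof. by rewrite /loewner_le -scalerBl -subr_ge0; apply: psdZ. Qed.

Lemma loewner_le_addr n (A B : 'M[C]_n) : psd B -> loewner_le A (A + B).
Proof. by rewrite /loewner_le addrC addKr. Qed.

Lemma loewner_le_congr n m (A B : 'M[C]_n) (X : 'M[C]_(n, m)) :
  loewner_le A B -> loewner_le (adjmx X *m A *m X) (adjmx X *m B *m X).
Proof. by rewrite /loewner_le -mulmxBl -mulmxBr; apply: psd_congr. Qed.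

Lemma projector_le1 n (P : 'M[C]_n) : projector P -> loewner_le P 1%:M.
Proof. by move=> /projectorC /psd_projector. Qed.

Lemma loewner_le_pinch n (M S : 'M[C]_n) t :
  psd M -> adjmx S = S -> 0 < t ->
  loewner_le M ((1 + t) *: (S *m M *m S)
                + (1 + t^-1) *: ((1%:M - S) *m M *m (1%:M - S))).
Proof.
move=> hM hS t_gt0; set T := 1%:M - S.
have hT : adjmx T = T by rewrite adjmxB adjmx1 hS.
have eST : S + T = 1%:M by rewrite addrC subrK.
clearbody T.
pose X := t *: S - T.
have hX : adjmx X = X by rewrite adjmxB adjmxZ hS hT geC0_conj // ltW.
have eM : M = (S + T) *m M *m (S + T) by rewrite eST mul1mx mulmx1.
rewrite /loewner_le; suff -> : (1 + t) *: (S *m M *m S) + (1 + t^-1) *: (T *m M *m T) - M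
          = t^-1 *: (adjmx X *m M *m X).
  by apply/psdZ/psd_congr; rewrite // invr_ge0 ltW.
rewrite hX {3}eM /X !(mulmxDl, mulmxDr, mulNmx, mulmxN) -!scalemxAl -!scalemxAr.
move: (S *m M *m S) (S *m M *m T) (T *m M *m S) (T *m M *m T) => a b c d.
by apply/matrixP=> i j; rewrite !mxE; field; rewrite gt_eqF.
Qed.

Lemma psd_spectral n (A : 'M[C]_n) : psd A ->
  exists U : 'M[C]_n, exists d : 'rV[C]_n,
    [/\ U *m adjmx U = 1%:M, adjmx U *m U = 1%:M, (forall i, 0 <= d 0 i) &
        A = adjmx U *m diag_mx d *m U].
Proof.
move=> hA; have adjE m p (M : 'M[C]_(m, p)) : (M ^t* )%sesqui = adjmx M.
  by rewrite /adjmx map_trmx.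
have /orthomx_spectralP : A \is normalmx by apply/normalmxP; rewrite adjE hA.1.
set U := spectralmx A; set d := spectral_diag A => eA.
have uU : U \is unitarymx by apply: spectral_unitarymx.
have UU' : U *m adjmx U = 1%:M by rewrite -adjE; apply/unitarymxP.
have U'U : adjmx U *m U = 1%:M.
  by rewrite -adjE -invmx_unitary // mulVmx // spectral_unit.
rewrite invmx_unitary // adjE in eA.
exists U, d; split => // i.
have := psd_diag_ge0 i (psd_congr (adjmx U) hA).
by rewrite adjmxK eA !mulmxA UU' mul1mx -mulmxA UU' mulmx1 mxE eqxx mulr1n.
Qed.

Lemma mxtrace_psd_mul_ge0 n (M rho : 'M[C]_n) :
  psd M -> psd rho -> 0 <= \tr (M *m rho).
Proof.
move=> hM hrho; have [U [d [_ _ d_ge0 ->]]] := psd_spectral hM.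
rewrite -!mulmxA mxtrace_mulC !mulmxA -!mulmxA.
have := psd_congr (adjmx U) hrho; rewrite adjmxK => hN.
rewrite /mxtrace; apply: sumr_ge0 => i _.
by rewrite mul_diag_mx mxE mulr_ge0 // mulmxA psd_diag_ge0.
Qed.

Lemma loewner_le_trace n (A B rho : 'M[C]_n) :
  loewner_le A B -> psd rho -> \tr (A *m rho) <= \tr (B *m rho).
Proof.
move=> hAB /(mxtrace_psd_mul_ge0 hAB).
by rewrite mulmxBl raddfB subr_ge0.
Qed.

Definition diag_in n (U : 'M[C]_n) (d : 'rV[C]_n) := adjmx U *m diag_mx d *m U.

Section DiagIn.
Variables (n : nat) (U : 'M[C]_n).

Lemma diag_inB (f g : 'rV[C]_n) : diag_in U (f - g) = diag_in U f - diag_in U g.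
Proof. by rewrite /diag_in linearB /= mulmxBr mulmxBl. Qed.

Lemma diag_inZ a (f : 'rV[C]_n) : diag_in U (a *: f) = a *: diag_in U f.
Proof. by rewrite /diag_in linearZ /= -scalemxAr -scalemxAl. Qed.

Lemma psd_diag_in (f : 'rV[C]_n) : (forall i, 0 <= f 0 i) -> psd (diag_in U f).
Proof. by move=> f_ge0; apply/psd_congr/psd_diag. Qed.

Lemma diag_in1 : adjmx U *m U = 1%:M -> diag_in U (const_mx 1) = 1%:M.
Proof. by move=> U'U; rewrite /diag_in diag_const_mx mulmx1. Qed.

Lemma diag_inM (f g : 'rV[C]_n) : U *m adjmx U = 1%:M ->
  diag_in U f *m diag_in U g = diag_in U (\row_i (f 0 i * g 0 i)).
Proof.
move=> UU'; rewrite /diag_in !mulmxA -(mulmxA _ U) UU' mulmx1 -(mulmxA _ (diag_mx f)).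
congr (_ *m _ *m _); apply/matrixP => i j; rewrite mul_diag_mx !mxE.
by case: eqP => _; rewrite ?mulr1n ?mulr0n ?mulr0.
Qed.

End DiagIn.

Lemma psd_spectral_cut n (A : 'M[C]_n) c : psd A -> c \is Num.real ->
  exists S : 'M[C]_n, [/\ projector S, loewner_le (c *: S) A &
    loewner_le ((1%:M - S) *m A *m (1%:M - S)) (c *: (1%:M - S))].
Proof.
move=> hA c_real; have [U [d [UU' U'U d_ge0 ->]]] := psd_spectral hA.
pose e := \row_i (if c <= d 0 i then 1 else 0 : C).
have e_ge0 i : 0 <= e 0 i by rewrite mxE; case: ifP.
exists (diag_in U e); rewrite -/(diag_in U d) -(diag_in1 U'U) -diag_inB /loewner_le.
split.
- split; first exact: (psd_diag_in U e_ge0).1.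
  rewrite diag_inM //; congr (diag_in U _); apply/matrixP => i j.
  by rewrite !ord1 !mxE; case: ifP; rewrite ?mulr1 ?mulr0.
- rewrite -diag_inZ -diag_inB; apply: psd_diag_in => i; rewrite !mxE.
  by case: ifP; rewrite ?mulr1 ?mulr0 ?subr0 ?subr_ge0.
- rewrite !diag_inM // -diag_inZ -diag_inB; apply: psd_diag_in => i; rewrite !mxE.
  case: ifP => [_|lt_dc]; first by rewrite subrr !mulr0 subrr.
  rewrite subr0 !mulr1 mul1r subr_ge0 ltW // real_ltNge ?lt_dc //.
  exact: ger0_real.
Qed.

Lemma loewner_le_cut_shift n (P Q S : 'M[C]_n) c t :
  psd P -> loewner_le P 1%:M -> psd Q -> projector S ->
  0 < t -> c * (1 + t^-1) <= t ->
  loewner_le ((1%:M - S) *m (P + Q) *m (1%:M - S)) (c *: (1%:M - S)) ->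
  loewner_le P (S + t *: 1%:M).
Proof.
move=> hP P_le1 hQ hS t_gt0 hc hcut; have [S_adj SS] := hS.
have T_adj : adjmx (1%:M - S) = 1%:M - S by rewrite adjmxB adjmx1 S_adj.
have T_psd : psd (1%:M - S) by apply/psd_projector/projectorC.
have SPS_le : loewner_le (S *m P *m S) S.
  by have := loewner_le_congr S P_le1; rewrite S_adj mulmx1 SS.
have TPT_le : loewner_le ((1%:M - S) *m P *m (1%:M - S)) (c *: (1%:M - S)).
  apply: loewner_le_trans hcut.
  by have := loewner_le_congr (1%:M - S) (loewner_le_addr P hQ); rewrite T_adj.
have -> : S + t *: 1%:M = (1 + t) *: S + t *: (1%:M - S).
  by rewrite scalerDl scale1r -addrA -scalerDr [S + (_ - S)]addrC subrK.
apply: loewner_le_trans (loewner_le_pinch hP S_adj t_gt0) _.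
apply: loewner_leD; first exact/loewner_leZ/SPS_le/addr_ge0/ltW.
apply: loewner_le_trans (loewner_leZ _ TPT_le) _.
  by rewrite addr_ge0 // invr_ge0 ltW.
by rewrite scalerA mulrC; apply: loewner_le_scale.
Qed.

Lemma mxtrace_le_shift n (P S rho : 'M[C]_n) t :
  loewner_le P (S + t *: 1%:M) -> density rho -> \tr (P *m rho) - t <= \tr (S *m rho).
Proof.
move=> hPS [rho_psd tr1]; have := loewner_le_trace hPS rho_psd.
by rewrite mulmxDl -scalemxAl mul1mx mxtraceD mxtraceZ tr1 mulr1 lerBlDr.
Qed.

Lemma projector_cover n (P1 P2 : 'M[C]_n) t :
  projector P1 -> projector P2 -> 0 < t ->
  exists S : 'M[C]_n, [/\ projector S, loewner_le P1 (S + t *: 1%:M),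
    loewner_le P2 (S + t *: 1%:M) & loewner_le S ((2 / t ^+ 2) *: (P1 + P2))].
Proof.
move=> hP1 hP2 t_gt0; have [psdP1 psdP2] := (psd_projector hP1, psd_projector hP2).
have [t_le1|t_gt1] := real_leP (gtr0_real t_gt0) (real1 C); last first.
  have P_le (P : 'M[C]_n) : projector P -> loewner_le P (0 + t *: 1%:M).
    move=> /projector_le1 P_le1; rewrite add0r; apply: loewner_le_trans P_le1 _.
    by rewrite -{1}(scale1r 1%:M); apply/loewner_le_scale/psd1/ltW.
  exists 0; split; [|exact: P_le..|].
    by split; [apply/matrixP=> i j; rewrite !(adjmxE, mxE) conjC0 | rewrite mul0mx].
  by rewrite /loewner_le subr0; apply/psdZ/psdD; rewrite ?divr_ge0 ?exprn_ge0 ?ltW.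
pose c := t ^+ 2 / 2.
have c_gt0 : 0 < c by rewrite divr_gt0 ?exprn_gt0.
have [S [hS cS_le cut]] := psd_spectral_cut (psdD psdP1 psdP2) (gtr0_real c_gt0).
have hc : c * (1 + t^-1) <= t.
  have -> : c * (1 + t^-1) = t - t * (1 - t) / 2 by rewrite /c; field; rewrite gt_eqF.
  by rewrite lerBlDr lerDl divr_ge0 ?mulr_ge0 ?subr_ge0 ?(ltW t_gt0).
exists S; split=> //.
- exact: loewner_le_cut_shift (projector_le1 hP1) psdP2 hS t_gt0 hc cut.
- by rewrite (addrC P1) in cut; apply: loewner_le_cut_shift (projector_le1 hP2) psdP1 hS t_gt0 hc cut.
- have /loewner_leZ /(_ cS_le) : 0 <= c^-1 by rewrite invr_ge0 ltW.
  by rewrite scalerA mulVf ?gt_eqF // scale1r invf_div.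
Qed.

End Loewner.

Theorem lemma2 (C : numClosedFieldType) (n : nat) (P1 P2 : 'M[C]_n)
    (hP1 : projector P1) (hP2 : projector P2) (delta : C) (hdelta : 0 < delta) :
  exists Pstar : 'M[C]_n,
    projector Pstar /\
    (forall rho : 'M[C]_n, density rho ->
       \tr (P1 *m rho) - delta <= \tr (Pstar *m rho) /\
       \tr (P2 *m rho) - delta <= \tr (Pstar *m rho)) /\
    loewner_le Pstar ((2 / delta ^+ 2) *: (P1 + P2)).
Proof.
have [S [hS P1_le P2_le S_le]] := projector_cover hP1 hP2 hdelta.
exists S; split=> //; split=> // rho hrho.
by split; apply: mxtrace_le_shift hrho.
Qed.
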